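(* Let $A\in\mathbb{R}^{d\times d}$, $B\in\mathbb{R}^{d\times n}$, $C\in\mathbb{R}^{n\times d}$, $D\in\mathbb{R}^{n\times n}$ with every eigenvalue of $A$ in the closed left half-plane, and let $H(\xi)=D+C(\xi I-A)^{-1}B$. Let $X\in\mathbb{R}^{d\times d}$ be symmetric and let $L,W$ be real matrices (with the same number of rows) satisfying $-A^TX-XA=L^TL$, $C-B^TX=W^TL$ and $D+D^T=W^TW$. Let $$Z(\xi)=W+L(\xi I-A)^{-1}B,\qquad Y(\xi)=\begin{bmatrix}\xi I-A & -B\\ L & W\end{bmatrix}.$$ Then $Z^\star Z=H+H^\star$, and $Z$ is a spectral factor of $H+H^\star$ if and only if $Y(\lambda)$ has full row rank for all $\lambda\in\mathbb{C}$ with $\mathrm{Re}(\lambda)>0$.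
   Context: For a real rational matrix $G$, $G^\star(\xi):=G(-\xi)^T$. If $Z\in\mathbb{R}^{r\times n}(\xi)$ and $F=Z^\star Z$, $Z$ is called a spectral factor of $F$ if $Z$ is analytic in the open right half-plane and $Z(\lambda)$ has full row rank for every $\lambda$ in the open right half-plane. *)

From HB Require Import structures.
From mathcomp Require Import all_boot all_order all_algebra.
From mathcomp Require Import generic_quotient fraction.
From mathcomp Require Import complex.
Set Implicit Arguments. Unset Strict Implicit. Unset Printing Implicit Defensive.
Import Order.TTheory GRing.Theory Num.Theory.
Local Open Scope ring_scope.

Notation "x %:F" := (@FracField.tofrac _ x).

Definition ratf (R : rcfType) := {fraction {poly R}}.

Definition xi_rf (R : rcfType) : ratf R := ('X)%:F.

Definition cmx (R : rcfType) m n (M : 'M[R]_(m, n)) : 'M[ratf R]_(m, n) :=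
  map_mx (fun x => (x%:P)%:F) M.

Definition cplx_mx (R : rcfType) m n (M : 'M[R]_(m, n)) : 'M[R[i]]_(m, n) :=
  map_mx (fun x => (x%:C)%C) M.

Definition ceval (R : rcfType) (p : {poly R}) (z : R[i]) : R[i] :=
  (map_poly (fun x => (x%:C)%C) p).[z].

Definition rf_neg (R : rcfType) (f : ratf R) : ratf R :=
  let r := repr f in
  ((\n_r \Po - 'X)%:F) / ((\d_r \Po - 'X)%:F).

Definition mxstar (R : rcfType) m n (G : 'M[ratf R]_(m, n)) : 'M[ratf R]_(n, m) :=
  (map_mx (@rf_neg R) G)^T.

(* The rational function f is analytic at z and takes value v there:
   f = p/q with q(z) <> 0 and v = p(z)/q(z). *)
Definition rf_value_at (R : rcfType) (f : ratf R) (z : R[i]) (v : R[i]) : Prop :=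
  exists p q : {poly R},
    [/\ ceval q z != 0, f = p%:F / q%:F & v = ceval p z / ceval q z].

Definition rmx_value_at (R : rcfType) m n (Z : 'M[ratf R]_(m, n))
  (z : R[i]) (M : 'M[R[i]]_(m, n)) : Prop :=
  forall i j, rf_value_at (Z i j) z (M i j).

Definition spectral_factor (R : rcfType) r n (Z : 'M[ratf R]_(r, n))
  (F : 'M[ratf R]_(n, n)) : Prop :=
  mxstar Z *m Z = F /\
  forall lam : R[i], 0 < Re lam ->
    exists M : 'M[R[i]]_(r, n), rmx_value_at Z lam M /\ \rank M = r.

Definition tf (R : rcfType) d m n (A : 'M[R]_d) (B : 'M[R]_(d, n))
  (C : 'M[R]_(m, d)) (D : 'M[R]_(m, n)) : 'M[ratf R]_(m, n) :=
  cmx D + cmx C *m invmx ((xi_rf R)%:M - cmx A) *m cmx B.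

From HB Require Import structures.
From mathcomp Require Import all_boot all_order all_algebra.
From mathcomp Require Import generic_quotient fraction.
From mathcomp Require Import complex.
Set Implicit Arguments. Unset Strict Implicit. Unset Printing Implicit Defensive.
Import Order.TTheory GRing.Theory Num.Theory.
Local Open Scope ring_scope.

(* With P(s) = (sI - A)^-1, the Lur'e equations give W^T W = D + D^T,
   W^T L = C - B^T X and, since L^T L = (-sI - A)^T X + X (sI - A),
   P(-s)^T L^T L P(s) = X P(s) + P(-s)^T X.  Substituting these into
   Z(-s)^T Z(s) every term containing X cancels and H(s) + H(-s)^T remains;
   this is an identity over any field, used at s = xi in R(xi).
   If Re lam > 0 then lam is not an eigenvalue of A, so lam I - A is
   invertible.  Writing Z with the common denominator char_poly A shows that
   Z is analytic at lam with value W + L (lam I - A)^-1 B, which is the Schur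
   complement of lam I - A in Y(lam).  Hence rank Y(lam) = d + rank Z(lam). *)

Definition tf_at (K : fieldType) d m n (A : 'M[K]_d) (B : 'M[K]_(d, n))
    (C : 'M[K]_(m, d)) (D : 'M[K]_(m, n)) (s : K) : 'M[K]_(m, n) :=
  D + C *m invmx (s%:M - A) *m B.

Lemma map_tf_at (K K' : fieldType) (f : {rmorphism K -> K'}) d m n
    (A : 'M[K]_d) (B : 'M[K]_(d, n)) (C : 'M[K]_(m, d)) (D : 'M[K]_(m, n)) s :
  map_mx f (tf_at A B C D s) = tf_at (map_mx f A) (map_mx f B) (map_mx f C) (map_mx f D) (f s).
Proof.
by rewrite /tf_at map_mxD !map_mxM map_invmx map_mxB map_scalar_mx.
Qed.

Section KalmanYakubovichPopov.
Variables (K : fieldType) (d n r : nat).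
Variables (A : 'M[K]_d) (B : 'M[K]_(d, n)) (C : 'M[K]_(n, d)) (D : 'M[K]_n).
Variables (X : 'M[K]_d) (L : 'M[K]_(r, d)) (W : 'M[K]_(r, n)).
Hypotheses (X_sym : X^T = X) (lyapunov : - A^T *m X - X *m A = L^T *m L).
Hypotheses (C_eq : C - B^T *m X = W^T *m L) (D_eq : D + D^T = W^T *m W).

Lemma tf_at_factorization s :
  s%:M - A \in unitmx -> (- s)%:M - A \in unitmx ->
  (tf_at A B L W (- s))^T *m tf_at A B L W s = tf_at A B C D s + (tf_at A B C D (- s))^T.
Proof.
move=> unitP unitQ; rewrite /tf_at.
set P := invmx (s%:M - A); set Q := invmx ((- s)%:M - A).
have LtL : Q^T *m (L^T *m L) *m P = X *m P + Q^T *m X.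
  have -> : L^T *m L = ((- s)%:M - A)^T *m X + X *m (s%:M - A).
    rewrite -lyapunov raddfB /= tr_scalar_mx mulmxBl mulmxBr mul_scalar_mx.
    by rewrite mul_mx_scalar scaleNr mulNmx addrACA addNr add0r.
  rewrite mulmxDr mulmxDl !mulmxA -trmx_mul (mulmxV unitQ) trmx1 mul1mx.
  by rewrite -!mulmxA (mulmxV unitP) mulmx1.
have LtW : L^T *m W = C^T - X *m B.
  by rewrite -[L^T *m W]trmxK trmx_mul trmxK -C_eq raddfB /= trmx_mul trmxK X_sym.
have cross1 : W^T *m L *m P *m B = C *m P *m B - B^T *m X *m P *m B.
  by rewrite -C_eq !mulmxBl.
have cross2 : B^T *m Q^T *m L^T *m W = B^T *m Q^T *m C^T - B^T *m Q^T *m X *m B.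
  by rewrite -mulmxA LtW mulmxBr !mulmxA.
have quad : B^T *m Q^T *m L^T *m L *m P *m B =
            B^T *m X *m P *m B + B^T *m Q^T *m X *m B.
  have -> : B^T *m Q^T *m L^T *m L *m P *m B = B^T *m (Q^T *m (L^T *m L) *m P) *m B.
    by rewrite !mulmxA.
  by rewrite LtL mulmxDr mulmxDl !mulmxA.
rewrite !raddfD /= !trmx_mul !mulmxA !mulmxDl cross1 cross2 quad -D_eq.
by rewrite [_ - _ + (_ + _)]addrA subrK addrACA subrK (addrAC D) addrA.
Qed.
End KalmanYakubovichPopov.

Lemma mxrank_block_schur (K : fieldType) d r n (P : 'M[K]_d) (B : 'M[K]_(d, n))
    (L : 'M[K]_(r, d)) (W : 'M[K]_(r, n)) :
  P \in unitmx -> \rank (block_mx P (- B) L W) = (d + \rank (W + L *m invmx P *m B)%R)%N.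
Proof.
move=> unitP.
have -> : block_mx P (- B) L W =
    block_mx 1%:M 0 (L *m invmx P) 1%:M *m block_mx P 0 0 (W + L *m invmx P *m B)
      *m block_mx 1%:M (- (invmx P *m B)) 0 1%:M.
  rewrite !mulmx_block !(mul0mx, mulmx0, mul1mx, mulmx1, addr0, add0r).
  by rewrite -mulmxA mulVmx // mulmx1 !mulmxN !mulmxA mulmxV // mul1mx addrC addrK.
rewrite mxrankMfree; last by rewrite row_free_unit unitmxE det_ublock !det1 mulr1 unitr1.
rewrite -mxrank_tr trmx_mul mxrankMfree; last first.
  by rewrite row_free_unit unitmx_tr unitmxE det_lblock !det1 mulr1 unitr1.
by rewrite mxrank_tr rank_diag_block_mx mxrank_unit.
Qed.

Lemma unitmx_sub_scalar (K : fieldType) d (A : 'M[K]_d) a :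
  ~~ eigenvalue A a -> a%:M - A \in unitmx.
Proof.
move=> not_eig; rewrite unitmxE unitfE; apply: contraNN not_eig => /det0P[v v_nz vA0].
apply/eigenvalueP; exists v => //.
by apply/eqP; rewrite -mul_mx_scalar eq_sym -subr_eq0 -mulmxBr vA0.
Qed.

Section FractionRepresentative.
Variable T : idomainType.
Local Open Scope quotient_scope.

Lemma pi_fractionE (x : {ratio T}) : \pi_{fraction T} x = (\n_x)%:F / (\d_x)%:F.
Proof.
have tofracE (a : T) : a%:F = \pi_{fraction T} (Ratio a 1).
  by rewrite /FracField.tofrac; unlock.
rewrite !tofracE -[_^-1]FracField.pi_inv -[_ * _]FracField.pi_mul; congr \pi.
rewrite /FracField.mulf /FracField.invf !numden_Ratio ?oner_neq0 ?denom_ratioP //.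
by rewrite mulr1 mul1r Ratio_numden.
Qed.

Lemma fraction_reprE (f : {fraction T}) : f = (\n_(repr f))%:F / (\d_(repr f))%:F.
Proof. by rewrite -pi_fractionE reprK. Qed.

Lemma fractionP (f : {fraction T}) : exists p q, q != 0 /\ f = p%:F / q%:F.
Proof. by exists \n_(repr f), \d_(repr f); rewrite -fraction_reprE denom_ratioP. Qed.

End FractionRepresentative.

Lemma comp_polyNXK (R : comNzRingType) (p : {poly R}) : p \Po - 'X \Po - 'X = p.
Proof.
by rewrite -comp_polyA rmorphN /= comp_polyX opprK comp_polyXr.
Qed.

Lemma comp_polyNX_eq0 (R : comNzRingType) (p : {poly R}) : (p \Po - 'X == 0) = (p == 0).
Proof.
apply/eqP/eqP => [|->]; last exact: comp_poly0.
by move=> /(congr1 (comp_poly (- 'X))); rewrite comp_polyNXK comp_poly0.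
Qed.

Section RationalReflection.
Variable R : rcfType.
Local Notation refl := (comp_poly (- 'X : {poly R})).

Lemma rf_negE (p q : {poly R}) : q != 0 ->
  rf_neg (p%:F / q%:F) = (refl p)%:F / (refl q)%:F.
Proof.
move=> q_nz; rewrite /rf_neg; set f := p%:F / q%:F.
have /eqP := fraction_reprE f; rewrite {1}/f.
rewrite eqr_div ?tofrac_eq0 ?denom_ratioP // -!tofracM tofrac_eq => /eqP eq_f.
apply/eqP; rewrite eqr_div ?tofrac_eq0 ?comp_polyNX_eq0 ?denom_ratioP //.
by rewrite -!tofracM tofrac_eq -!rmorphM mulrC eq_f mulrC.
Qed.

Lemma rf_neg_tofrac (p : {poly R}) : rf_neg p%:F = (refl p)%:F.
Proof. by rewrite -[p%:F]divr1 -tofrac1 rf_negE ?oner_neq0 // rmorph1 tofrac1 divr1. Qed.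

Lemma rf_neg_is_zmod_morphism : zmod_morphism (@rf_neg R).
Proof.
move=> f g; have [p [q [q_nz ->]]] := fractionP f; have [p' [q' [q'_nz ->]]] := fractionP g.
rewrite -mulNr -tofracN addf_div ?tofrac_eq0 // -!tofracM -tofracD.
rewrite !rf_negE ?mulf_neq0 // -mulNr -tofracN addf_div ?tofrac_eq0 ?comp_polyNX_eq0 //.
by rewrite -!tofracM -tofracD rmorphD !rmorphM rmorphN.
Qed.

Lemma rf_neg_is_monoid_morphism : monoid_morphism (@rf_neg R).
Proof.
split=> [|f g]; first by rewrite -tofrac1 rf_neg_tofrac rmorph1.
have [p [q [q_nz ->]]] := fractionP f; have [p' [q' [q'_nz ->]]] := fractionP g.
rewrite mulf_div -!tofracM !rf_negE ?mulf_neq0 //.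
by rewrite mulf_div -!tofracM !rmorphM.
Qed.

HB.instance Definition _ :=
  GRing.isZmodMorphism.Build (ratf R) (ratf R) (@rf_neg R) rf_neg_is_zmod_morphism.
HB.instance Definition _ :=
  GRing.isMonoidMorphism.Build (ratf R) (ratf R) (@rf_neg R) rf_neg_is_monoid_morphism.

Lemma rf_neg_xi : rf_neg (xi_rf R) = - xi_rf R.
Proof. by rewrite rf_neg_tofrac comp_polyX tofracN. Qed.

Lemma rf_neg_cmx m n (M : 'M[R]_(m, n)) : map_mx (@rf_neg R) (cmx M) = cmx M.
Proof. by apply/matrixP => i j; rewrite !mxE rf_neg_tofrac comp_polyC. Qed.

End RationalReflection.

Section CharPolyRmorph.
Variables (R : comNzRingType) (K : fieldType) (f : {rmorphism {poly R} -> K}).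
Variables (d m n : nat) (A : 'M[R]_d) (B : 'M[R]_(d, n)).
Variables (C : 'M[R]_(m, d)) (D : 'M[R]_(m, n)).

Definition tf_num : 'M[{poly R}]_(m, n) :=
  char_poly A *: map_mx polyC D + map_mx polyC C *m \adj (char_poly_mx A) *m map_mx polyC B.

Lemma map_char_poly_mx_rmorph :
  map_mx f (char_poly_mx A) = (f 'X)%:M - map_mx (f \o polyC) A.
Proof. by rewrite map_mxB map_scalar_mx -map_mx_comp. Qed.

Lemma unitmx_rmorph_char_poly :
  ((f 'X)%:M - map_mx (f \o polyC) A \in unitmx) = (f (char_poly A) != 0).
Proof. by rewrite -map_char_poly_mx_rmorph unitmxE det_map_mx unitfE. Qed.

Lemma tf_at_rmorphE : f (char_poly A) != 0 ->
  tf_at (map_mx (f \o polyC) A) (map_mx (f \o polyC) B) (map_mx (f \o polyC) C)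
        (map_mx (f \o polyC) D) (f 'X)
  = (f (char_poly A))^-1 *: map_mx f tf_num.
Proof.
move=> chi_nz; rewrite /tf_at -map_char_poly_mx_rmorph.
rewrite /invmx unitmxE det_map_mx unitfE chi_nz -map_mx_adj.
rewrite -scalemxAr -scalemxAl /tf_num map_mxD map_mxZ !map_mxM -!map_mx_comp.
by rewrite scalerDr scalerA mulVf // scale1r.
Qed.

End CharPolyRmorph.

Lemma cmxE (R : rcfType) m n (M : 'M[R]_(m, n)) :
  cmx M = map_mx (@FracField.tofrac _ \o polyC) M.
Proof. by []. Qed.

Section RationalTransferFunction.
Variables (R : rcfType) (d m n : nat) (A : 'M[R]_d) (B : 'M[R]_(d, n)).
Variables (C : 'M[R]_(m, d)) (D : 'M[R]_(m, n)).

Lemma char_poly_tofrac_neq0 : (char_poly A)%:F != 0 :> ratf R.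
Proof. by rewrite tofrac_eq0 monic_neq0 // char_poly_monic. Qed.

Lemma xi_sub_cmx_unit : (xi_rf R)%:M - cmx A \in unitmx.
Proof.
by have := unitmx_rmorph_char_poly (@FracField.tofrac _) A; rewrite char_poly_tofrac_neq0.
Qed.

Lemma tf_fracE :
  tf A B C D = ((char_poly A)%:F)^-1 *: map_mx (@FracField.tofrac _) (tf_num A B C D).
Proof. exact: tf_at_rmorphE char_poly_tofrac_neq0. Qed.

Lemma mxstar_tf : mxstar (tf A B C D) = (tf_at (cmx A) (cmx B) (cmx C) (cmx D) (- xi_rf R))^T.
Proof. by rewrite /mxstar /tf -/(tf_at _ _ _ _ _) map_tf_at /= rf_neg_xi !rf_neg_cmx. Qed.

End RationalTransferFunction.

Lemma tf_factorization (R : rcfType) d n r (A : 'M[R]_d) (B : 'M[R]_(d, n))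
    (C : 'M[R]_(n, d)) (D : 'M[R]_n) (X : 'M[R]_d) (L : 'M[R]_(r, d)) (W : 'M[R]_(r, n)) :
  X^T = X -> - A^T *m X - X *m A = L^T *m L ->
  C - B^T *m X = W^T *m L -> D + D^T = W^T *m W ->
  mxstar (tf A B L W) *m tf A B L W = tf A B C D + mxstar (tf A B C D).
Proof.
move=> X_sym lyapunov C_eq D_eq; rewrite !mxstar_tf.
apply: (tf_at_factorization (X := cmx X)).
- by rewrite cmxE map_trmx X_sym.
- move/(congr1 (fun M => cmx M)): lyapunov.
  by rewrite !cmxE map_mxB !map_mxM map_mxN !map_trmx.
- by move/(congr1 (fun M => cmx M)): C_eq; rewrite !cmxE map_mxB !map_mxM !map_trmx.
- by move/(congr1 (fun M => cmx M)): D_eq; rewrite !cmxE map_mxD map_mxM !map_trmx.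
- exact: xi_sub_cmx_unit.
- rewrite -rf_neg_xi -(rf_neg_cmx A) -map_scalar_mx -map_mxB map_unitmx.
  exact: xi_sub_cmx_unit.
Qed.

Section ComplexEvaluation.
Variables (R : rcfType) (z : R[i]).

(* [ceval p z] is convertible to [horner_morph ceval_comm p], a ring morphism. *)
Fact ceval_comm : commr_rmorph (real_complex R) z.
Proof. by move=> x; apply: mulrC. Qed.

Local Notation cev := (horner_morph ceval_comm).

Lemma cev_polyC m n (M : 'M[R]_(m, n)) : map_mx (cev \o polyC) M = cplx_mx M.
Proof. by apply: eq_map_mx => x; apply: horner_morphC. Qed.

Lemma ceval_char_poly_eq0 d (A : 'M[R]_d) :
  (ceval (char_poly A) z == 0) = eigenvalue (cplx_mx A) z.
Proof. by rewrite eigenvalue_root_char -map_char_poly. Qed.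

Lemma rf_value_at_uniq (f : ratf R) v v' :
  rf_value_at f z v -> rf_value_at f z v' -> v = v'.
Proof.
move=> [p [q [qz_nz -> ->]]] [p' [q' [q'z_nz + ->]]].
have nz_of_ceval (u : {poly R}) : ceval u z != 0 -> u != 0.
  by apply: contraNneq => ->; rewrite /ceval rmorph0 horner0.
move/eqP; rewrite eqr_div ?tofrac_eq0 ?nz_of_ceval // -!tofracM tofrac_eq => /eqP eq_pq.
apply/eqP; rewrite eqr_div //.
by change (cev p * cev q' == cev p' * cev q); rewrite -!rmorphM eq_pq.
Qed.

Section TransferFunctionValue.
Variables (d m n : nat) (A : 'M[R]_d) (B : 'M[R]_(d, n)).
Variables (C : 'M[R]_(m, d)) (D : 'M[R]_(m, n)).
Hypothesis not_eig : ~~ eigenvalue (cplx_mx A) z.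

Lemma tf_at_cplxE :
  tf_at (cplx_mx A) (cplx_mx B) (cplx_mx C) (cplx_mx D) z
  = (ceval (char_poly A) z)^-1 *: map_mx (fun p => ceval p z) (tf_num A B C D).
Proof.
rewrite -!cev_polyC -[X in tf_at _ _ _ _ X](horner_morphX ceval_comm).
by apply: tf_at_rmorphE; rewrite ceval_char_poly_eq0.
Qed.

Lemma tf_value_at :
  rmx_value_at (tf A B C D) z (tf_at (cplx_mx A) (cplx_mx B) (cplx_mx C) (cplx_mx D) z).
Proof.
move=> i j; exists (tf_num A B C D i j), (char_poly A).
by rewrite ceval_char_poly_eq0 tf_fracE tf_at_cplxE !mxE ![_^-1 * _]mulrC.
Qed.

End TransferFunctionValue.
End ComplexEvaluation.

Theorem lemmaD1 (R : rcfType) (d n r : nat)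
  (A : 'M[R]_d) (B : 'M[R]_(d, n)) (C : 'M[R]_(n, d)) (D : 'M[R]_n)
  (X : 'M[R]_d) (L : 'M[R]_(r, d)) (W : 'M[R]_(r, n)) :
  (forall lam : R[i], eigenvalue (cplx_mx A) lam -> Re lam <= 0) ->
  X^T = X ->
  - A^T *m X - X *m A = L^T *m L ->
  C - B^T *m X = W^T *m L ->
  D + D^T = W^T *m W ->
  let H := tf A B C D in
  let Z := tf A B L W in
  mxstar Z *m Z = H + mxstar H /\
  (spectral_factor Z (H + mxstar H) <->
   forall lam : R[i], 0 < Re lam ->
     \rank (block_mx (lam%:M - cplx_mx A) (- cplx_mx B)
                     (cplx_mx L) (cplx_mx W)) = (d + r)%N).
Proof.
move=> eig_left X_sym lyapunov C_eq D_eq H Z.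
have factorization : mxstar Z *m Z = H + mxstar H.
  exact: tf_factorization X_sym lyapunov C_eq D_eq.
pose Z_at lam := tf_at (cplx_mx A) (cplx_mx B) (cplx_mx L) (cplx_mx W) lam.
have not_eig lam : 0 < Re lam -> ~~ eigenvalue (cplx_mx A) lam.
  by move=> Re_gt0; apply/negP => /eig_left /(lt_le_trans Re_gt0); rewrite ltxx.
have rank_Y lam : 0 < Re lam ->
    \rank (block_mx (lam%:M - cplx_mx A) (- cplx_mx B) (cplx_mx L) (cplx_mx W))
    = (d + \rank (Z_at lam))%N.
  by move=> Re_gt0; apply: mxrank_block_schur; apply/unitmx_sub_scalar/not_eig.
split=> //; split=> [[_ Z_full] lam Re_gt0 | Y_full].
  have [M [Z_lam rank_M]] := Z_full lam Re_gt0.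
  suff M_eq : M = Z_at lam by rewrite rank_Y // -M_eq rank_M.
  apply/matrixP => i j.
  exact: rf_value_at_uniq (Z_lam i j) (tf_value_at B L W (not_eig lam Re_gt0) i j).
split=> // lam Re_gt0; exists (Z_at lam).
split; first exact/tf_value_at/not_eig.
by apply/(@addnI d); rewrite -rank_Y // Y_full.
Qed.
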